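(* For all integers $n\geq 4$, with $x,y,z,y_1,y_2,z_1,z_2,\Phi,f$ as in the context, \[f(n)<\frac{\Phi(x-2y_1+z_2)\,(x^5-x^4-1)\,y^{14}\,(z_2z^4-z^4-1)}{x^7\,(y^{10}-2y_2y^8+y^8+2y_1y^4-2y^4+1)\,z_1z^6}<1.\]
   Context: Let $\mu(m)=\pi\sqrt{m}$. For an integer $n\geq 2$ put $x=\mu(n-1)$, $y=\mu(n)=\sqrt{x^2+\pi^2}$, $z=\mu(n+1)=\sqrt{x^2+2\pi^2}$, and \[f(n)=e^{x-2y+z}\,\frac{y^{14}(x^5-x^4-1)(z^5-z^4-1)}{x^7z^7(y^5-y^4+1)^2}.\] Define \begin{align*} y_2&=x+\frac{\pi^2}{2x}-\frac{\pi^4}{8x^3}+\frac{\pi^6}{16x^5}-\frac{5\pi^8}{128x^7}+\frac{7\pi^{10}}{256x^9},\qquad y_1=y_2-\frac{21\pi^{12}}{1024x^{11}},\\ z_2&=x+\frac{\pi^2}{x}-\frac{\pi^4}{2x^3}+\frac{\pi^6}{2x^5}-\frac{5\pi^8}{8x^7}+\frac{7\pi^{10}}{8x^9},\qquad z_1=z_2-\frac{21\pi^{12}}{16x^{11}}, \end{align*} and $\Phi(t)=1+t+\frac{t^2}{2}+\frac{t^3}{6}+\frac{t^4}{24}+\frac{t^5}{120}+\frac{t^6}{720}$. *)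

From Stdlib Require Import Reals Lra.
Open Scope R_scope.

Definition mu (m : R) : R := PI * sqrt m.

Definition xv (n : nat) : R := mu (INR n - 1).
Definition yv (n : nat) : R := mu (INR n).
Definition zv (n : nat) : R := mu (INR n + 1).

Definition fval (n : nat) : R :=
  let x := xv n in let y := yv n in let z := zv n in
  exp (x - 2 * y + z) *
  (y ^ 14 * (x ^ 5 - x ^ 4 - 1) * (z ^ 5 - z ^ 4 - 1)) /
  (x ^ 7 * z ^ 7 * (y ^ 5 - y ^ 4 + 1) ^ 2).

Definition y2f (x : R) : R :=
  x + PI ^ 2 / (2 * x) - PI ^ 4 / (8 * x ^ 3) + PI ^ 6 / (16 * x ^ 5)
    - 5 * PI ^ 8 / (128 * x ^ 7) + 7 * PI ^ 10 / (256 * x ^ 9).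
Definition y1f (x : R) : R := y2f x - 21 * PI ^ 12 / (1024 * x ^ 11).
Definition z2f (x : R) : R :=
  x + PI ^ 2 / x - PI ^ 4 / (2 * x ^ 3) + PI ^ 6 / (2 * x ^ 5)
    - 5 * PI ^ 8 / (8 * x ^ 7) + 7 * PI ^ 10 / (8 * x ^ 9).
Definition z1f (x : R) : R := z2f x - 21 * PI ^ 12 / (16 * x ^ 11).

Definition Phi (t : R) : R :=
  1 + t + t ^ 2 / 2 + t ^ 3 / 6 + t ^ 4 / 24 + t ^ 5 / 120 + t ^ 6 / 720.

Definition middle (n : nat) : R :=
  let x := xv n in let y := yv n in let z := zv n in
  let y1 := y1f x in let y2 := y2f x in let z1 := z1f x in let z2 := z2f x in
  Phi (x - 2 * y1 + z2) * (x ^ 5 - x ^ 4 - 1) * y ^ 14 * (z2 * z ^ 4 - z ^ 4 - 1) /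
  (x ^ 7 * (y ^ 10 - 2 * y2 * y ^ 8 + y ^ 8 + 2 * y1 * y ^ 4 - 2 * y ^ 4 + 1)
   * z1 * z ^ 6).

(* Put a = PI^2 / x^2, so that y = x sqrt(1 + a) and z = x sqrt(1 + 2a).  Then y1, y2, z1, z2 are
   x times truncated Taylor polynomials of these square roots, so y1 < y < y2 and z1 < z < z2.
   The exponent x - 2 y1 + z2 equals -s with s = x a^2 second_diff(a) in (0, 1/5], and
   exp(-s) < Phi(-s) because Phi(-s) times the degree-7 Taylor polynomial of exp(s) exceeds 1;
   comparing the remaining factors one by one gives f(n) < middle.  For the upper bound, in the
   variables 1/x and a the middle term is Phi(-s) (1+a)^2/(1+2a) N/D with N <= D, by an AM-GM
   estimate whose sixth-order error terms are absorbed by a^2/(8x); finally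
   Phi(-s) < 1 - s + s^2/2, and (1 - s + s^2/2)(1+a)^2 < 1 + 2a because s(1 - s/2)(1+a)^2 > a^2.
   Each one-variable polynomial inequality is certified by an explicit factorisation whose cofactor
   is checked positive on the relevant interval. *)

From Stdlib Require Import Reals Lra Psatz List.
Import ListNotations.
Open Scope R_scope.

Lemma PI_sq_bounds : 9 < PI^2 <= 16.
Proof. pose proof PI2_3_2; pose proof PI_4; split; nra. Qed.

Lemma Rinv_in_01 p : 1 < p -> 0 < / p < 1.
Proof.
  intro Hp; split; [apply Rinv_0_lt_compat; lra|].
  rewrite <- Rinv_1; apply Rinv_0_lt_contravar; lra.
Qed.

Lemma lt_of_sq_lt u v : 0 <= v -> u^2 < v^2 -> u < v.
Proof. intros Hv H; destruct (Rlt_or_le u v); [assumption | nra]. Qed.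

Lemma Rdiv_le_Rdiv n0 n1 d0 d1 : 0 <= n0 <= n1 -> 0 < d1 <= d0 -> n0 / d0 <= n1 / d1.
Proof.
  intros Hn Hd; unfold Rdiv.
  apply Rmult_le_compat; try lra.
  - left; apply Rinv_0_lt_compat; lra.
  - apply Rinv_le_contravar; lra.
Qed.

Lemma prod_le_sq_of_mean u v c : 0 <= c <= (u + v) / 2 -> (u + v) / 2 <= 1 ->
  (1 - u) * (1 - v) <= (1 - c) ^ 2.
Proof.
  intros Hc Hm.
  assert (0 <= ((u + v)/2 - c) * (2 - c - (u + v)/2)) by (apply Rmult_le_pos; lra).
  pose proof (pow2_ge_0 (u - v)); nra.
Qed.

Lemma quartic_gap_pos w v : 2 <= w <= v -> 0 < w^4 * v - w^4 - 1.
Proof.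
  intro Hw; pose proof (pow_incr 2 w 4 ltac:(lra)).
  replace (w^4 * v - w^4 - 1) with (w^4 * (v - 1) - 1) by ring; nra.
Qed.

Lemma scaled_sqrt_bounds x w c lo hi : 0 < x -> 0 < w -> 0 <= hi ->
  w^2 = x^2 * c -> lo^2 < c < hi^2 -> x * lo < w < x * hi.
Proof.
  intros Hx Hw Hhi Hwc [Hl Hh].
  assert (0 < x^2) by nra.
  assert ((x * lo)^2 < w^2) by (rewrite Hwc; nra).
  assert (w^2 < (x * hi)^2) by (rewrite Hwc; nra).
  split; apply lt_of_sq_lt; nra.
Qed.

Fixpoint horner (l : list R) (a : R) : R :=
  match l with [] => 0 | c :: l' => c + a * horner l' a end.

(* Valid on [[0, b]] because [a * h >= b * Rmin 0 h] whenever [0 <= a <= b]. *)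
Fixpoint horner_lb (l : list R) (b : R) : R :=
  match l with [] => 0 | c :: l' => c + b * Rmin 0 (horner_lb l' b) end.

Lemma horner_lb_le l a b : 0 <= a <= b -> horner_lb l b <= horner l a.
Proof.
  intros [Ha Hab]; induction l as [|c l IH]; simpl; [lra|].
  apply Rplus_le_compat_l.
  destruct (Rle_dec 0 (horner_lb l b)) as [H|H].
  - rewrite Rmin_left, Rmult_0_r by lra; apply Rmult_le_pos; lra.
  - rewrite Rmin_right by lra.
    apply Rle_trans with (a * horner_lb l b); [nra|].
    apply Rmult_le_compat_l; lra.
Qed.

Lemma lt_of_horner_certificate a b k l u v :
  0 < a <= b -> v - u = a ^ k * horner l a -> 0 < horner_lb l b -> u < v.
Proof.
  intros Ha Huv Hlb.
  assert (0 < a ^ k) by (apply pow_lt; lra).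
  assert (0 < horner l a) by (eapply Rlt_le_trans; [|apply horner_lb_le]; eauto; lra).
  nra.
Qed.

Ltac eval_rmin :=
  repeat match goal with
  | |- context [Rmin 0 ?e] =>
      lazymatch e with context [Rmin] => fail | _ =>
        first [rewrite (Rmin_left 0 e) by lra | rewrite (Rmin_right 0 e) by lra] end
  end.

Ltac certify a b k l :=
  apply (lt_of_horner_certificate a b k l);
  [lra | simpl horner; field | simpl horner_lb; eval_rmin; lra].

(* Truncated Taylor expansions of [sqrt (1 + a)] and [sqrt (1 + 2 a)]. *)
Definition sqrt1_hi (a : R) := 1 + a/2 - a^2/8 + a^3/16 - 5*a^4/128 + 7*a^5/256.
Definition sqrt1_lo (a : R) := sqrt1_hi a - 21*a^6/1024.
Definition sqrt2_hi (a : R) := 1 + a - a^2/2 + a^3/2 - 5*a^4/8 + 7*a^5/8.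
Definition sqrt2_lo (a : R) := sqrt2_hi a - 21*a^6/16.

Lemma sqrt1_lo_sq a : 0 < a <= 1/3 -> sqrt1_lo a ^ 2 < 1 + a.
Proof.
  intro Ha; unfold sqrt1_lo, sqrt1_hi.
  certify a (1/3) 7%nat [33/1024; -165/16384; 77/16384; -77/32768; 147/131072; -441/1048576].
Qed.

Lemma sqrt1_hi_sq a : 0 < a <= 1/3 -> 1 + a < sqrt1_hi a ^ 2.
Proof.
  intro Ha; unfold sqrt1_hi.
  certify a (1/3) 6%nat [21/512; -3/256; 81/16384; -35/16384; 49/65536].
Qed.

Lemma sqrt2_lo_sq a : 0 < a <= 1/3 -> sqrt2_lo a ^ 2 < 1 + 2 * a.
Proof.
  intro Ha; unfold sqrt2_lo, sqrt2_hi.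
  certify a (1/3) 7%nat [33/8; -165/64; 77/32; -77/32; 147/64; -441/256].
Qed.

Lemma sqrt2_hi_sq a : 0 < a <= 1/3 -> 1 + 2 * a < sqrt2_hi a ^ 2.
Proof.
  intro Ha; unfold sqrt2_hi.
  certify a (1/3) 6%nat [21/8; -3/2; 81/64; -35/32; 49/64].
Qed.

Lemma sqrt1_lo_gt1 a : 0 < a <= 1/3 -> 1 < sqrt1_lo a.
Proof.
  intro Ha; unfold sqrt1_lo, sqrt1_hi.
  certify a (1/3) 1%nat [1/2; -1/8; 1/16; -5/128; 7/256; -21/1024].
Qed.

Lemma sqrt2_lo_gt1 a : 0 < a <= 1/3 -> 1 < sqrt2_lo a.
Proof.
  intro Ha; unfold sqrt2_lo, sqrt2_hi.
  certify a (1/3) 1%nat [1; -1/2; 1/2; -5/8; 7/8; -21/16].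
Qed.

Lemma sqrt1_hi_lt a : 0 < a <= 1/3 -> sqrt1_hi a < 1 + a.
Proof.
  intro Ha; unfold sqrt1_hi.
  certify a (1/3) 1%nat [1/2; 1/8; -1/16; 5/128; -7/256].
Qed.

Lemma sqrt1_hi_sq_sub_lt a : 0 < a <= 1/3 -> sqrt1_hi a ^ 2 - (1 + a) < a ^ 6.
Proof.
  intro Ha; unfold sqrt1_hi.
  certify a (1/3) 6%nat [491/512; 3/256; -81/16384; 35/16384; -49/65536].
Qed.

Lemma mean_bound_poly a : 0 < a <= 1/3 ->
  a^2 * (1 + a) * sqrt2_lo a / 4 + 2 * sqrt1_hi a * sqrt2_lo a < (1 + a) * (sqrt2_lo a + 1).
Proof.
  intro Ha; unfold sqrt1_hi, sqrt2_lo, sqrt2_hi.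
  certify a (1/3) 2%nat [1/2; -7/8; 21/64; -85/128; 33/32; 77/256; -207/512; 609/1024;
                         -77/512; 147/2048].
Qed.

(* [x - 2 y1 + z2 = - x a^2 second_diff a] for [a = PI^2 / x^2]. *)
Definition second_diff (a : R) := 1/4 - 3*a/8 + 35*a^2/64 - 105*a^3/128 - 21*a^4/512.

Lemma second_diff_pos a : 0 < a <= 1/3 -> 0 < second_diff a.
Proof.
  intro Ha; unfold second_diff.
  certify a (1/3) 0%nat [1/4; -3/8; 35/64; -105/128; -21/512].
Qed.

Lemma second_diff_lt a : 0 < a <= 1/3 -> second_diff a < 1/4.
Proof.
  intro Ha; unfold second_diff.
  certify a (1/3) 1%nat [3/8; -35/64; 105/128; 21/512].
Qed.

Lemma second_diff_large a : 0 < a <= 1/3 -> a < 729/100 * second_diff a ^ 2 * (1 + a)^4.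
Proof.
  intro Ha; unfold second_diff.
  certify a (1/3) 0%nat [729/1600; -871/1600; 729/2560; -729/2560; -1763451/409600;
    -2222721/409600; -2043387/819200; 648081/655360; 280374129/26214400; 98237853/6553600;
    86694867/13107200; 3536379/6553600; 321489/26214400].
Qed.

Definition exp_taylor7 (s : R) :=
  1 + s + s^2/2 + s^3/6 + s^4/24 + s^5/120 + s^6/720 + s^7/5040.

Lemma Phi_neg_mul_exp_taylor7 s : 0 < s <= 1/5 -> 1 < Phi (- s) * exp_taylor7 s.
Proof.
  intro Hs; unfold Phi, exp_taylor7.
  certify s (1/5) 7%nat [1/5040; 1/6720; 1/10080; 1/75600; 1/120960; 1/3628800; 1/3628800].
Qed.

Lemma Phi_neg_lt s : 0 < s <= 1/5 -> Phi (- s) < 1 - s + s^2/2.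
Proof.
  intro Hs; unfold Phi.
  certify s (1/5) 3%nat [1/6; -1/24; 1/120; -1/720].
Qed.

Lemma Phi_neg_pos s : 0 < s <= 1/5 -> 0 < Phi (- s).
Proof.
  intro Hs; unfold Phi.
  certify s (1/5) 0%nat [1; -1; 1/2; -1/6; 1/24; -1/120; 1/720].
Qed.

Lemma exp_taylor7_le s : 0 <= s -> exp_taylor7 s <= exp s.
Proof.
  intro Hs.
  assert (Hgrow : Un_growing (E1 s)).
  { intro n; unfold E1; rewrite tech5.
    enough (0 <= / INR (Factorial.fact (S n)) * s ^ S n) by lra.
    apply Rmult_le_pos; [left; apply Rinv_0_lt_compat, INR_fact_lt_0 | apply pow_le; lra]. }
  pose proof (growing_ineq _ _ Hgrow (E1_cvg s) 7) as H.
  unfold E1, exp_taylor7 in *; cbn [sum_f_R0] in H.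
  rewrite !INR_IZR_INZ in H; cbn in H; lra.
Qed.

Lemma exp_neg_lt_Phi s : 0 < s <= 1/5 -> exp (- s) < Phi (- s).
Proof.
  intro Hs.
  pose proof (exp_taylor7_le s ltac:(lra)) as Hexp.
  pose proof (Phi_neg_mul_exp_taylor7 s Hs) as Hprod.
  pose proof (Phi_neg_pos s Hs).
  rewrite exp_Ropp.
  assert (0 < exp s) by apply exp_pos.
  apply (Rmult_lt_reg_r (exp s)); [lra|].
  rewrite Rinv_l by lra; nra.
Qed.

(* For [al = 1/x] and [a = PI^2/x^2]: [scaled_num_x al = (x^5 - x^4 - 1) / x^5],
   [scaled_num_z al a = (z2 z^4 - z^4 - 1) / (z1 z^4)] and [scaled_den al a = D / y^10], where
   [D = y^10 - 2 y2 y^8 + y^8 + 2 y1 y^4 - 2 y^4 + 1] is a factor of the denominator of [middle]. *)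
Definition scaled_num_x (al : R) := 1 - al - al^5.
Definition scaled_num_z (al a : R) := (sqrt2_hi a - al - al^5 / (1 + 2*a)^2) / sqrt2_lo a.
Definition scaled_den (al a : R) :=
  1 - 2*al*sqrt1_hi a/(1 + a) + al^2/(1 + a) + 2*al^5*sqrt1_lo a/(1 + a)^3
    - 2*al^6/(1 + a)^3 + al^10/(1 + a)^5.

Section ScaledDenominator.
Variables al a : R.
Hypothesis al_range : 0 < al <= 1/5.
Hypothesis a_range : 0 < a <= 1/3.
Hypothesis a_le : a <= 16 * al^2.

Local Notation P1 := (sqrt1_lo a).
Local Notation Q1 := (sqrt1_hi a).
Local Notation P2 := (sqrt2_lo a).
Local Notation bt := (al / P2).
Local Notation gm := (al * Q1 / (1 + a)).
Local Notation dl := (al * a^2 / 8).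
Local Notation e2 := (21 * a^6 / (16 * P2)).
Local Notation rem := (al^2 * (Q1^2 - (1 + a)) / (1 + a)^2).

Lemma scaled_num_le : 0 < scaled_num_x al * scaled_num_z al a <= (1 - al) * (1 - bt) + e2.
Proof.
  pose proof (sqrt2_lo_gt1 a a_range) as HP2.
  pose proof (Rinv_in_01 P2 HP2) as Hinv.
  assert (Hal5 : 0 < al^5 <= al).
  { split; [apply pow_lt; lra|].
    pose proof (pow_incr al 1 4 ltac:(lra)) as H4; rewrite pow1 in H4.
    replace (al^5) with (al * al^4) by ring; nra. }
  assert (Hsq : 1 <= (1 + 2*a)^2) by nra.
  assert (Hrho : 0 < al^5 / (1 + 2*a)^2 <= al^5).
  { split; [apply Rdiv_lt_0_compat; lra|].
    apply (Rmult_le_reg_r ((1 + 2*a)^2)); [lra|].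
    unfold Rdiv; rewrite Rmult_assoc, Rinv_l by lra; nra. }
  assert (Hz : scaled_num_z al a = 1 + e2 - bt - al^5 / (1 + 2*a)^2 * / P2).
  { unfold scaled_num_z.
    replace (sqrt2_hi a) with (P2 + 21 * a^6 / 16) by (unfold sqrt2_lo; ring).
    field; split; lra. }
  assert (He2 : 0 <= e2) by (apply Rle_mult_inv_pos; [pose proof (pow_le a 6); lra | lra]).
  assert (Hbt : 0 < bt <= al) by (unfold Rdiv; split; nra).
  assert (Hrho' : 0 < al^5 / (1 + 2*a)^2 * / P2 <= al^5) by nra.
  rewrite Hz; unfold scaled_num_x.
  set (rho := al^5 / (1 + 2*a)^2 * / P2) in *.
  split; nra.
Qed.

Lemma mean_bound : gm + dl <= (al + bt) / 2.
Proof.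
  pose proof (sqrt2_lo_gt1 a a_range) as HP2.
  pose proof (mean_bound_poly a a_range) as Hmean.
  assert (Hid : (al + bt) / 2 - gm - dl
    = al * ((1 + a) * (P2 + 1) - (a^2 * (1 + a) * P2 / 4 + 2 * Q1 * P2)) / (2 * (1 + a) * P2))
    by (field; lra).
  enough (0 <= al * ((1 + a) * (P2 + 1) - (a^2 * (1 + a) * P2 / 4 + 2 * Q1 * P2))
                 / (2 * (1 + a) * P2)) by lra.
  apply Rle_mult_inv_pos; nra.
Qed.

Lemma scaled_den_ge : (1 - gm)^2 - rem <= scaled_den al a.
Proof.
  pose proof (sqrt1_lo_gt1 a a_range) as HP1.
  assert (Hid : scaled_den al a - ((1 - gm)^2 - rem)
                = 2 * al^5 * (P1 - al) / (1 + a)^3 + al^10 / (1 + a)^5)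
    by (unfold scaled_den; field; lra).
  assert (0 <= 2 * al^5 * (P1 - al) / (1 + a)^3).
  { apply Rle_mult_inv_pos; [pose proof (pow_le al 5); nra | apply pow_lt; lra]. }
  assert (0 <= al^10 / (1 + a)^5).
  { apply Rle_mult_inv_pos; [apply pow_le | apply pow_lt]; lra. }
  lra.
Qed.

Lemma sixth_order_le : e2 + rem <= dl * (2 * (1 - gm) - dl).
Proof.
  pose proof (sqrt2_lo_gt1 a a_range) as HP2.
  pose proof (sqrt1_hi_lt a a_range) as HQ1.
  pose proof (sqrt1_hi_sq_sub_lt a a_range) as Hrem.
  assert (Ha6 : 0 <= a^6) by (apply pow_le; lra).
  assert (He2 : e2 <= 21 * a^6 / 16).
  { apply (Rmult_le_reg_r (16 * P2)); [lra|].
    unfold Rdiv; rewrite Rmult_assoc, Rinv_l by lra. nra. }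
  assert (Hrem' : rem <= al^2 * a^6).
  { pose proof (Rinv_in_01 ((1 + a)^2) ltac:(nra)) as Hinv.
    pose proof (sqrt1_hi_sq a a_range).
    assert (0 < al^2) by nra.
    unfold Rdiv; rewrite Rmult_assoc.
    apply Rmult_le_compat_l; nra. }
  assert (Hgm : gm <= al).
  { apply (Rmult_le_reg_r (1 + a)); [lra|].
    unfold Rdiv; rewrite Rmult_assoc, Rinv_l by lra; nra. }
  assert (Ha4 : a^4 <= 16 * al^2 / 27).
  { pose proof (pow_incr a (1/3) 3 ltac:(lra)).
    replace (a^4) with (a^3 * a) by ring; nra. }
  assert (Hdl : 0 <= dl <= 1/360) by (assert (0 <= a^2 <= 1/9) by nra; split; nra).
  assert (3/2 * dl <= dl * (2 * (1 - gm) - dl)).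
  { enough (0 <= dl * (1/2 - 2 * gm - dl)) by lra.
    apply Rmult_le_pos; lra. }
  assert (a^6 * (21/16 + al^2) <= a^2 * (16 * al^2 / 27) * (21/16 + 1/25)).
  { replace (a^6) with (a^2 * a^4) by ring.
    apply Rmult_le_compat; try nra. }
  nra.
Qed.

(* [(1 - al)(1 - bt) <= (1 - gm - dl)^2] by AM-GM, and the cross term [2 dl (1 - gm)] pays for
   the sixth-order errors [e2] and [rem]. *)
Lemma scaled_num_le_den : 0 < scaled_num_x al * scaled_num_z al a <= scaled_den al a.
Proof.
  pose proof (sqrt2_lo_gt1 a a_range) as HP2.
  pose proof (sqrt1_lo_gt1 a a_range) as HP1.
  pose proof (sqrt1_hi_lt a a_range) as HQ1.
  assert (Hbt : 0 < bt <= al) by (pose proof (Rinv_in_01 P2 HP2); unfold Rdiv; split; nra).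
  assert (Hgm : 0 <= gm).
  { assert (0 <= a^6) by (apply pow_le; lra).
    apply Rle_mult_inv_pos; unfold sqrt1_lo in HP1; nra. }
  assert (Hdl : 0 <= dl) by (pose proof (pow2_ge_0 a); unfold Rdiv; nra).
  pose proof mean_bound.
  pose proof (prod_le_sq_of_mean al bt (gm + dl) ltac:(lra) ltac:(lra)).
  assert ((1 - (gm + dl))^2 = (1 - gm)^2 - dl * (2 * (1 - gm) - dl)) by ring.
  pose proof scaled_num_le; pose proof scaled_den_ge; pose proof sixth_order_le.
  lra.
Qed.
End ScaledDenominator.

Lemma damped_ratio_lt1 a s x : 0 < a <= 1/3 -> 0 < x -> 9 < x^2 * a ->
  s = x * a^2 * second_diff a -> 0 < s <= 1/5 ->
  (1 - s + s^2/2) * ((1 + a)^2 / (1 + 2*a)) < 1.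
Proof.
  intros Ha Hx Hxa Hs Hs5.
  pose proof (second_diff_large a Ha); pose proof (second_diff_pos a Ha).
  set (q := 9/10 * x * second_diff a * (1 + a)^2).
  assert (Hq : 1 < q).
  { assert (0 < q) by (unfold q; pose proof (pow_lt (1 + a) 2); nra).
    assert (Hq2 : q^2 = 81/100 * (x^2 * a) * (second_diff a ^ 2 * (1 + a)^4) / a)
      by (unfold q; field; lra).
    assert (0 < second_diff a ^ 2 * (1 + a)^4) by (pose proof (pow_lt (1 + a) 4); nra).
    enough (1 < q^2) by nra.
    rewrite Hq2; apply (Rmult_lt_reg_r a); [lra|].
    unfold Rdiv; rewrite Rmult_assoc, Rinv_l, Rmult_1_r by lra; nra. }
  assert (Hkey : a^2 < s * (1 - s/2) * (1 + a)^2).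
  { assert (9/10 * s * (1 + a)^2 = a^2 * q) by (rewrite Hs; unfold q; ring).
    pose proof (pow_lt (1 + a) 2); pose proof (pow_lt a 2).
    assert (0 <= s * (1/10 - s/2) * (1 + a)^2) by (apply Rmult_le_pos; nra).
    nra. }
  replace ((1 - s + s^2/2) * ((1 + a)^2 / (1 + 2*a)))
    with (((1 + a)^2 - s * (1 - s/2) * (1 + a)^2) / (1 + 2*a)) by (field; lra).
  apply (Rmult_lt_reg_r (1 + 2*a)); [lra|].
  unfold Rdiv; rewrite Rmult_assoc, Rinv_l by lra; nra.
Qed.

Lemma y1f_scaled x : x <> 0 -> y1f x = x * sqrt1_lo (PI^2 / x^2).
Proof. intro; unfold y1f, y2f, sqrt1_lo, sqrt1_hi; field; auto. Qed.

Lemma y2f_scaled x : x <> 0 -> y2f x = x * sqrt1_hi (PI^2 / x^2).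
Proof. intro; unfold y2f, sqrt1_hi; field; auto. Qed.

Lemma z1f_scaled x : x <> 0 -> z1f x = x * sqrt2_lo (PI^2 / x^2).
Proof. intro; unfold z1f, z2f, sqrt2_lo, sqrt2_hi; field; auto. Qed.

Lemma z2f_scaled x : x <> 0 -> z2f x = x * sqrt2_hi (PI^2 / x^2).
Proof. intro; unfold z2f, sqrt2_hi; field; auto. Qed.

Lemma second_diff_scaled x a :
  x - 2 * (x * sqrt1_lo a) + x * sqrt2_hi a = - (x * a^2 * second_diff a).
Proof. unfold sqrt1_lo, sqrt1_hi, sqrt2_hi, second_diff; field. Qed.

Definition f_expr (x y z : R) : R :=
  exp (x - 2 * y + z) *
  (y ^ 14 * (x ^ 5 - x ^ 4 - 1) * (z ^ 5 - z ^ 4 - 1)) /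
  (x ^ 7 * z ^ 7 * (y ^ 5 - y ^ 4 + 1) ^ 2).

Definition middle_expr (x y z : R) : R :=
  Phi (x - 2 * y1f x + z2f x) * (x ^ 5 - x ^ 4 - 1) * y ^ 14 * (z2f x * z ^ 4 - z ^ 4 - 1) /
  (x ^ 7 * (y ^ 10 - 2 * y2f x * y ^ 8 + y ^ 8 + 2 * y1f x * y ^ 4 - 2 * y ^ 4 + 1)
   * z1f x * z ^ 6).

Section Estimates.
Variables x y z : R.
Hypothesis x_pos : 0 < x.
Hypothesis y_pos : 0 < y.
Hypothesis z_pos : 0 < z.
Hypothesis y_sq : y^2 = x^2 + PI^2.
Hypothesis z_sq : z^2 = x^2 + 2 * PI^2.
Hypothesis x_large : 3 * PI^2 <= x^2.

Local Notation a := (PI^2 / x^2).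
Local Notation s := (x * a^2 * second_diff a).
Local Notation den := (y^10 - 2 * y2f x * y^8 + y^8 + 2 * y1f x * y^4 - 2 * y^4 + 1).

Lemma a_range : 0 < a <= 1/3.
Proof.
  pose proof PI_sq_bounds.
  assert (0 < x^2) by nra.
  split; [apply Rdiv_lt_0_compat; lra|].
  apply (Rmult_le_reg_r (x^2)); [lra|].
  unfold Rdiv; rewrite Rmult_assoc, Rinv_l by lra; lra.
Qed.

Lemma x_sq_a : x^2 * a = PI^2.
Proof. field; lra. Qed.

Lemma x_gt5 : 5 < x.
Proof. pose proof PI_sq_bounds; nra. Qed.

Lemma y_gt5 : 5 < y.
Proof. pose proof x_gt5; pose proof PI_sq_bounds; apply lt_of_sq_lt; nra. Qed.

Lemma z_gt5 : 5 < z.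
Proof. pose proof x_gt5; pose proof PI_sq_bounds; apply lt_of_sq_lt; nra. Qed.

Lemma y_sq_scaled : y^2 = x^2 * (1 + a).
Proof. rewrite y_sq; field; lra. Qed.

Lemma z_sq_scaled : z^2 = x^2 * (1 + 2 * a).
Proof. rewrite z_sq; field; lra. Qed.

Lemma s_range : 0 < s <= 1/5.
Proof.
  pose proof a_range as Ha; pose proof PI_sq_bounds.
  pose proof (second_diff_pos a Ha); pose proof (second_diff_lt a Ha).
  assert (0 < s) by (pose proof (pow_lt a 2); apply Rmult_lt_0_compat; nra).
  assert (Hs2 : s^2 = PI^2 * a^3 * second_diff a ^ 2)
    by (field; lra).
  assert (a^3 <= 1/27) by (pose proof (pow_incr a (1/3) 3 ltac:(lra)); lra).
  assert (s^2 < 1/25).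
  { rewrite Hs2. pose proof (pow_lt a 3).
    assert (second_diff a ^ 2 <= 1/16) by nra.
    assert (PI^2 * a^3 <= 16 * (1/27)) by (apply Rmult_le_compat; lra).
    pose proof (pow2_ge_0 (second_diff a)); nra. }
  nra.
Qed.

Lemma y_bounds : y1f x < y < y2f x.
Proof.
  pose proof a_range as Ha; pose proof (sqrt1_lo_gt1 a Ha).
  rewrite y1f_scaled, y2f_scaled by lra.
  apply scaled_sqrt_bounds with (1 + a); try lra.
  - unfold sqrt1_lo in *; pose proof (pow_le a 6); lra.
  - apply y_sq_scaled.
  - split; [apply sqrt1_lo_sq | apply sqrt1_hi_sq]; exact Ha.
Qed.

Lemma z_bounds : z1f x < z < z2f x.
Proof.
  pose proof a_range as Ha; pose proof (sqrt2_lo_gt1 a Ha).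
  rewrite z1f_scaled, z2f_scaled by lra.
  apply scaled_sqrt_bounds with (1 + 2 * a); try lra.
  - unfold sqrt2_lo in *; pose proof (pow_le a 6); lra.
  - apply z_sq_scaled.
  - split; [apply sqrt2_lo_sq | apply sqrt2_hi_sq]; exact Ha.
Qed.

Lemma middle_exponent : x - 2 * y1f x + z2f x = - s.
Proof. rewrite y1f_scaled, z2f_scaled by lra; apply second_diff_scaled. Qed.

Lemma den_scaled : den = y^10 * scaled_den (/ x) a.
Proof.
  rewrite y1f_scaled, y2f_scaled by lra.
  replace (y^10) with ((y^2)^5) by ring; replace (y^8) with ((y^2)^4) by ring;
  replace (y^4) with ((y^2)^2) by ring.
  rewrite y_sq_scaled; unfold scaled_den; field.
  pose proof PI_sq_bounds; split; nra.
Qed.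

Lemma inv_x_range : 0 < / x <= 1/5.
Proof.
  pose proof x_gt5; split; [apply Rinv_0_lt_compat; lra|].
  replace (1/5) with (/ 5) by field; apply Rinv_le_contravar; lra.
Qed.

Lemma a_le_inv_x_sq : a <= 16 * (/ x)^2.
Proof.
  pose proof PI_sq_bounds.
  replace a with (PI^2 * (/ x)^2) by (field; lra).
  apply Rmult_le_compat_r; [apply pow2_ge_0 | lra].
Qed.

Lemma scaled_den_pos : 0 < scaled_den (/ x) a.
Proof.
  pose proof (scaled_num_le_den (/ x) a inv_x_range a_range a_le_inv_x_sq); lra.
Qed.

Lemma den_pos : 0 < den.
Proof.
  rewrite den_scaled; apply Rmult_lt_0_compat; [apply pow_lt; lra | apply scaled_den_pos].
Qed.

Lemma den_le : den <= (y^5 - y^4 + 1)^2.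
Proof.
  pose proof y_bounds; pose proof (pow_lt y 8 y_pos); pose proof (pow_lt y 4 y_pos).
  assert ((y^5 - y^4 + 1)^2 - den = 2 * y^8 * (y2f x - y) + 2 * y^4 * (y - y1f x)) by ring.
  nra.
Qed.

Lemma z1f_pos : 0 < z1f x.
Proof. rewrite z1f_scaled by lra; pose proof (sqrt2_lo_gt1 a a_range); nra. Qed.

Lemma y_quintic_pos : 0 < y^5 - y^4 + 1.
Proof.
  pose proof y_gt5; pose proof (pow_lt y 4 y_pos).
  replace (y^5 - y^4 + 1) with (y^4 * y - y^4 + 1) by ring; nra.
Qed.

Lemma exp_lt_Phi : exp (x - 2 * y + z) < Phi (- s).
Proof.
  pose proof y_bounds; pose proof z_bounds; pose proof middle_exponent.
  apply Rlt_trans with (exp (- s)); [apply exp_increasing; lra|].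
  apply exp_neg_lt_Phi, s_range.
Qed.

Lemma z_factor_le : (z^5 - z^4 - 1) / (z^7 * (y^5 - y^4 + 1)^2)
                    <= (z2f x * z^4 - z^4 - 1) / (den * z1f x * z^6).
Proof.
  pose proof z_gt5; pose proof z_bounds; pose proof z1f_pos; pose proof den_pos; pose proof den_le.
  pose proof y_quintic_pos; pose proof (pow_lt z 4 z_pos); pose proof (pow_lt z 6 z_pos).
  pose proof (quartic_gap_pos z z ltac:(lra)).
  apply Rdiv_le_Rdiv; split; try lra.
  - replace (z^5) with (z^4 * z) by ring; nra.
  - apply Rmult_lt_0_compat; [apply Rmult_lt_0_compat|]; lra.
  - replace (z^7 * (y^5 - y^4 + 1)^2) with ((y^5 - y^4 + 1)^2 * (z * z^6)) by ring.
    replace (den * z1f x * z^6) with (den * (z1f x * z^6)) by ring.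
    apply Rmult_le_compat; try nra; apply Rmult_le_compat_r; lra.
Qed.

Lemma f_lt_middle : f_expr x y z < middle_expr x y z.
Proof.
  pose proof x_gt5; pose proof z_gt5; pose proof z1f_pos; pose proof den_pos.
  pose proof y_quintic_pos; pose proof z_factor_le; pose proof exp_lt_Phi.
  pose proof (Phi_neg_pos s s_range).
  pose proof (quartic_gap_pos x x ltac:(lra)); pose proof (quartic_gap_pos z z ltac:(lra)).
  unfold f_expr, middle_expr; rewrite middle_exponent.
  set (B := y^5 - y^4 + 1) in *.
  set (K := y^14 * (x^5 - x^4 - 1) / x^7).
  set (R0 := (z^5 - z^4 - 1) / (z^7 * B^2)) in *.
  set (R1 := (z2f x * z^4 - z^4 - 1) / (den * z1f x * z^6)) in *.
  assert (0 < K).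
  { apply Rdiv_lt_0_compat; [apply Rmult_lt_0_compat; [apply pow_lt|] | apply pow_lt]; lra. }
  assert (0 < R0) by (apply Rdiv_lt_0_compat; [lra | apply Rmult_lt_0_compat; apply pow_lt; lra]).
  replace (exp (x - 2 * y + z) * (y^14 * (x^5 - x^4 - 1) * (z^5 - z^4 - 1)) / (x^7 * z^7 * B^2))
    with (exp (x - 2 * y + z) * (K * R0)) by (unfold K, R0; field; repeat split; lra).
  replace (Phi (- s) * (x^5 - x^4 - 1) * y^14 * (z2f x * z^4 - z^4 - 1) / (x^7 * den * z1f x * z^6))
    with (Phi (- s) * (K * R1)) by (unfold K, R1; field; repeat split; lra).
  apply Rlt_le_trans with (Phi (- s) * (K * R0)).
  - apply Rmult_lt_compat_r; [apply Rmult_lt_0_compat|]; lra.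
  - apply Rmult_le_compat_l; [|apply Rmult_le_compat_l]; lra.
Qed.

Lemma middle_scaled : middle_expr x y z
  = Phi (- s) * ((1 + a)^2 / (1 + 2 * a))
    * (scaled_num_x (/ x) * scaled_num_z (/ x) a / scaled_den (/ x) a).
Proof.
  pose proof a_range; pose proof scaled_den_pos; pose proof (sqrt2_lo_gt1 a a_range).
  unfold middle_expr; rewrite middle_exponent, den_scaled, z1f_scaled, z2f_scaled by lra.
  replace (y^14) with ((y^2)^7) by ring; replace (y^10) with ((y^2)^5) by ring.
  replace (z^4) with ((z^2)^2) by ring; replace (z^6) with ((z^2)^3) by ring.
  rewrite y_sq_scaled, z_sq_scaled.
  unfold scaled_num_x, scaled_num_z; field.
  pose proof PI_sq_bounds; repeat split; nra.
Qed.

Lemma middle_lt_1 : middle_expr x y z < 1.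
Proof.
  pose proof a_range as Ha; pose proof s_range as Hs.
  pose proof scaled_den_pos.
  pose proof (scaled_num_le_den (/ x) a inv_x_range a_range a_le_inv_x_sq) as [Hnum Hle].
  pose proof (Phi_neg_pos s Hs); pose proof (Phi_neg_lt s Hs).
  assert (Hq : 0 < (1 + a)^2 / (1 + 2 * a)) by (apply Rdiv_lt_0_compat; nra).
  assert (Hratio : scaled_num_x (/ x) * scaled_num_z (/ x) a / scaled_den (/ x) a <= 1).
  { apply (Rmult_le_reg_r (scaled_den (/ x) a)); [lra|].
    unfold Rdiv; rewrite Rmult_assoc, Rinv_l by lra; lra. }
  assert (0 <= scaled_num_x (/ x) * scaled_num_z (/ x) a / scaled_den (/ x) a)
    by (apply Rle_mult_inv_pos; lra).
  assert (Hfin : (1 - s + s^2/2) * ((1 + a)^2 / (1 + 2 * a)) < 1).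
  { apply (damped_ratio_lt1 a s x); try lra.
    pose proof PI_sq_bounds; rewrite x_sq_a; lra. }
  rewrite middle_scaled.
  apply Rle_lt_trans with (Phi (- s) * ((1 + a)^2 / (1 + 2 * a))); [|nra].
  rewrite <- (Rmult_1_r (Phi (- s) * _)) at 2.
  apply Rmult_le_compat_l; [nra | lra].
Qed.
End Estimates.

Lemma mu_sq u : 0 <= u -> mu u ^ 2 = PI^2 * u.
Proof.
  intro Hu; unfold mu.
  rewrite Rpow_mult_distr, pow2_sqrt by exact Hu; reflexivity.
Qed.

Lemma mu_pos u : 0 < u -> 0 < mu u.
Proof. intro; apply Rmult_lt_0_compat; [apply PI_RGT_0 | apply sqrt_lt_R0; assumption]. Qed.

Theorem lemma3p4 (n : nat) (hn : (4 <= n)%nat) :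
  fval n < middle n /\ middle n < 1.
Proof.
  assert (Hn : 4 <= INR n) by (apply (le_INR 4) in hn; simpl in hn; lra).
  pose proof PI_sq_bounds.
  assert (Hx : xv n ^ 2 = PI^2 * (INR n - 1)) by (apply mu_sq; lra).
  assert (Hy : yv n ^ 2 = xv n ^ 2 + PI^2) by (unfold yv; rewrite mu_sq, Hx by lra; ring).
  assert (Hz : zv n ^ 2 = xv n ^ 2 + 2 * PI^2) by (unfold zv; rewrite mu_sq, Hx by lra; ring).
  assert (Hlarge : 3 * PI^2 <= xv n ^ 2) by (rewrite Hx; nra).
  assert (0 < xv n) by (apply mu_pos; lra).
  assert (0 < yv n) by (apply mu_pos; lra).
  assert (0 < zv n) by (apply mu_pos; lra).
  change (f_expr (xv n) (yv n) (zv n) < middle_expr (xv n) (yv n) (zv n)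
          /\ middle_expr (xv n) (yv n) (zv n) < 1).
  split; [apply f_lt_middle | apply middle_lt_1]; assumption.
Qed.
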